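(* Let $M\ge1$, $\boldsymbol{y},\boldsymbol{g}\in\mathbb{C}^{4M+1}$ and $\lambda_w>0$. Then $(\hat{\boldsymbol{x}}_1,\hat{\boldsymbol{x}}_2)$ is a minimizer of $$\min_{\boldsymbol{x}_1,\boldsymbol{x}_2}\ \tfrac12\|\boldsymbol{y}-\boldsymbol{x}_1-\boldsymbol{g}\odot\boldsymbol{x}_2\|_2^2+\lambda_w(\|\boldsymbol{x}_1\|_{\mathcal{A}}+\|\boldsymbol{x}_2\|_{\mathcal{A}})$$ if and only if, with $\boldsymbol{r}=\boldsymbol{y}-(\hat{\boldsymbol{x}}_1+\boldsymbol{g}\odot\hat{\boldsymbol{x}}_2)$, $$\|\boldsymbol{r}\|_{\mathcal{A}}^\star\le\lambda_w,\qquad \|\bar{\boldsymbol{g}}\odot\boldsymbol{r}\|_{\mathcal{A}}^\star\le\lambda_w,\qquad \langle\boldsymbol{r},\hat{\boldsymbol{x}}_1+\boldsymbol{g}\odot\hat{\boldsymbol{x}}_2\rangle_{\mathbb{R}}=\lambda_w\|\hat{\boldsymbol{x}}_1\|_{\mathcal{A}}+\lambda_w\|\hat{\boldsymbol{x}}_2\|_{\mathcal{A}}.$$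
   Context: $\boldsymbol{c}(\tau)\in\mathbb{C}^{4M+1}$ has entries $e^{-j2\pi n\tau}$, $n=-2M,\dots,2M$ ($j=\sqrt{-1}$); $\odot$ is entrywise product; $\|\boldsymbol{x}\|_{\mathcal{A}}=\inf\{\sum_k|a_k|:\boldsymbol{x}=\sum_ka_k\boldsymbol{c}(\tau_k),a_k\in\mathbb{C},\tau_k\in[0,1)\}$. Inner products: $\langle\boldsymbol{p},\boldsymbol{x}\rangle=\boldsymbol{x}^H\boldsymbol{p}$ and $\langle\boldsymbol{p},\boldsymbol{x}\rangle_{\mathbb{R}}=\mathrm{Re}(\boldsymbol{x}^H\boldsymbol{p})$. Dual norm: $\|\boldsymbol{p}\|_{\mathcal{A}}^\star=\sup_{\|\boldsymbol{x}\|_{\mathcal{A}}\le1}\langle\boldsymbol{p},\boldsymbol{x}\rangle_{\mathbb{R}}=\sup_{\tau\in[0,1)}|\sum_{n=-2M}^{2M}p_ne^{j2\pi n\tau}|$. *)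

From HB Require Import structures.
From mathcomp Require Import all_boot all_order all_algebra.
From mathcomp Require Import all_classical all_reals.
From mathcomp Require Import trigo.
From mathcomp Require Import complex.
Set Implicit Arguments. Unset Strict Implicit. Unset Printing Implicit Defensive.
Import Order.TTheory GRing.Theory Num.Theory.
Local Open Scope ring_scope.
Local Open Scope classical_set_scope.

Section Defs.
Variable R : realType.
Variable M : nat.

(* complex vectors of length 4M+1; entry i <-> frequency index n = i - 2M *)
Definition cvec := 'cV[R[i]]_(4 * M + 1).

Definition cabs (z : R[i]) : R := Num.sqrt (complex.Re z ^+ 2 + complex.Im z ^+ 2).

Definition freq (i : 'I_(4 * M + 1)) : int := (i : nat)%:Z - (2 * M)%:Z.

(* atom c(tau): entries e^{-j 2 pi n tau} = cos(2 pi n tau) - j sin(2 pi n tau) *)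
Definition atom (tau : R) : cvec :=
  \col_i (let t := 2 * pi * (freq i)%:~R * tau in complex.Complex (cos t) (- sin t)).

Definition atomic_norm (x : cvec) : R :=
  inf [set s : R | exists (K : nat) (a : 'I_K -> R[i]) (tau : 'I_K -> R),
         (forall k, 0 <= tau k < 1) /\
         x = \sum_(k < K) a k *: atom (tau k) /\
         s = \sum_(k < K) cabs (a k)].

Definition cinner (p x : cvec) : R[i] := \sum_i (conjc (x i 0) * p i 0).

Definition rinner (p x : cvec) : R := complex.Re (cinner p x).

Definition dual_atomic_norm (p : cvec) : R :=
  sup [set s : R | exists x : cvec, atomic_norm x <= 1 /\ s = rinner p x].

Definition hadamard (g x : cvec) : cvec := \col_i (g i 0 * x i 0).
Definition vconj (g : cvec) : cvec := \col_i conjc (g i 0).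

Definition sqnorm2 (v : cvec) : R := \sum_i cabs (v i 0) ^+ 2.

Definition objective (y g : cvec) (lam : R) (x1 x2 : cvec) : R :=
  2^-1 * sqnorm2 (y - x1 - hadamard g x2) + lam * (atomic_norm x1 + atomic_norm x2).

End Defs.

From mathcomp Require Import all_boot all_order all_algebra.
From mathcomp Require Import all_classical all_reals.
From mathcomp Require Import trigo.
From mathcomp Require Import complex.
From mathcomp Require Import ring lra.
Import Order.TTheory GRing.Theory Num.Theory.
Local Open Scope ring_scope.
Local Open Scope complex_scope.

(* The three conditions are the first-order optimality conditions of a convex
   problem.  Writing v for the change of x1 + g.x2, the objective is
   1/2 ||r - v||^2 plus the penalty.  Perturbing x1 (resp. x2) by t d and
   letting t -> 0+ gives <r, d>_R <= lam ||d||_A (resp. <conj g . r, d>_R <=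
   lam ||d||_A), i.e. the dual-norm bounds; these bounds give
   <r, x1 + g.x2>_R <= lam (||x1||_A + ||x2||_A) for all x1, x2, and shrinking
   the minimizer by the factor 1 - t gives the reverse inequality at the
   minimizer.  Conversely, that inequality and the expansion of the square show
   that no (x1, x2) does better.
   Besides homogeneity and the triangle inequality, the only fact needed about
   the atomic norm is <p, x>_R <= ||p||_A^* ||x||_A.  It requires ||x||_A to be
   finite -- every vector is a combination of atoms, because atoms at 4M+1
   distinct frequencies form an invertible Vandermonde system -- and to vanish
   only at 0, because atoms have entries of modulus one. *)

Lemma ler_of_ler_add_mul_small (R : realFieldType) (a b q : R) :
  (forall t, 0 < t < 1 -> a <= b + t * q) -> a <= b.
Proof.
move=> small; apply/ler_addgt0Pr => e e0.
have q1_gt0 : 0 < `|q| + 1 by rewrite ltr_wpDl.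
set u := e / (`|q| + 1).
have u_gt0 : 0 < u by rewrite divr_gt0.
have uq1 : u * (`|q| + 1) = e by rewrite mulfVK ?gt_eqF.
set t := Num.min 2^-1 u.
have t_gt0 : 0 < t by rewrite lt_min u_gt0 invr_gt0 ltr0n.
have /andP[t_le_half t_le_u] : (t <= 2^-1) && (t <= u) by rewrite -le_min.
have t_lt1 : t < 1 by apply: le_lt_trans t_le_half _; rewrite invf_lt1 ?ltr1n.
have tq_le : t * q <= e by have := normr_ge0 q; have := ler_norm q; nra.
by apply: le_trans (small t _) _; rewrite ?t_gt0 ?t_lt1 ?lerD2l.
Qed.

Section AtomicNormOptimality.
Variable R : realType.
Implicit Types a b z : R[i].

Lemma cabsE z : `|z| = (cabs z)%:C.
Proof. by rewrite normc_def. Qed.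

Lemma cabs_ge0 z : 0 <= cabs z.
Proof. exact: sqrtr_ge0. Qed.

Lemma cabsM a b : cabs (a * b) = cabs a * cabs b.
Proof. by apply: complexI; rewrite rmorphM /= -!cabsE normrM. Qed.

Lemma ler_cabs_sum (I : Type) (r : seq I) (F : I -> R[i]) :
  cabs (\sum_(i <- r) F i) <= \sum_(i <- r) cabs (F i).
Proof.
rewrite -lecR -cabsE rmorph_sum /=; apply: le_trans (ler_norm_sum _ _ _) _.
by rewrite le_eqVlt (eq_bigr _ (fun i _ => cabsE (F i))) eqxx.
Qed.

Lemma cabsJ z : cabs z^* = cabs z.
Proof. by case: z => a b; rewrite /cabs /= sqrrN. Qed.

Lemma cabs_real (c : R) : cabs c%:C = `|c|.
Proof. by rewrite /cabs /= expr0n /= addr0 sqrtr_sqr. Qed.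

Lemma cabs0_eq0 z : cabs z = 0 -> z = 0.
Proof. by move=> z0; apply/eqP; rewrite -normr_eq0 cabsE z0. Qed.

Lemma Re_le_cabs z : complex.Re z <= cabs z.
Proof.
apply: le_trans (ler_norm _) _; rewrite /cabs -sqrtr_sqr ler_wsqrtr //.
by rewrite lerDl sqr_ge0.
Qed.

Lemma sqr_cabs z : cabs z ^+ 2 = complex.Re z ^+ 2 + complex.Im z ^+ 2.
Proof. by rewrite /cabs sqr_sqrtr // addr_ge0 ?sqr_ge0. Qed.

Lemma ReD a b : complex.Re (a + b) = complex.Re a + complex.Re b.
Proof. by case: a; case: b. Qed.

Lemma Re_sum (I : Type) (r : seq I) (P : pred I) (F : I -> R[i]) :
  complex.Re (\sum_(i <- r | P i) F i) = \sum_(i <- r | P i) complex.Re (F i).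
Proof. exact: (big_morph _ ReD). Qed.

Lemma Re_realM (t : R) z : complex.Re (t%:C * z) = t * complex.Re z.
Proof. by case: z => a b /=; rewrite mul0r subr0. Qed.

Lemma Re_conjM a b :
  complex.Re (b^* * a) = complex.Re b * complex.Re a + complex.Im b * complex.Im a.
Proof. by case: a => a1 a2; case: b => b1 b2 /=; ring. Qed.

Definition expNi (t : R) : R[i] := cos t -i* sin t.

Lemma cabs_expNi t : cabs (expNi t) = 1.
Proof. by rewrite /cabs /= sqrrN cos2Dsin2 sqrtr1. Qed.

Lemma expNiD s t : expNi s * expNi t = expNi (s + t).
Proof.
apply/eqP; rewrite eq_complex /= cosD sinD.
by apply/andP; split; apply/eqP; ring.
Qed.

Lemma expNiX t k : expNi t ^+ k = expNi (k%:R * t).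
Proof.
elim: k => [|k IH]; first by rewrite expr0 mul0r /expNi cos0 sin0 oppr0.
by rewrite exprS IH expNiD -addn1 natrD mulrDl mul1r addrC.
Qed.

Variable M : nat.
Local Notation V := (cvec R M).
Implicit Types p u v x : V.

Lemma rinnerDr p u v : rinner p (u + v) = rinner p u + rinner p v.
Proof.
rewrite /rinner /cinner -ReD -big_split /=; congr complex.Re.
by apply: eq_bigr => i _; rewrite mxE rmorphD mulrDl.
Qed.

Lemma rinner0r p : rinner p 0 = 0.
Proof. by rewrite /rinner /cinner Re_sum big1 // => i _; rewrite mxE rmorph0 mul0r. Qed.

Lemma rinnerNr p v : rinner p (- v) = - rinner p v.
Proof. by apply/eqP; rewrite -addr_eq0 -rinnerDr addNr rinner0r. Qed.

Lemma rinnerZr p v (t : R) : rinner p (t%:C *: v) = t * rinner p v.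
Proof.
rewrite /rinner /cinner !Re_sum mulr_sumr; apply: eq_bigr => i _.
by rewrite mxE rmorphM /= oppr0 -mulrA Re_realM.
Qed.

Lemma rinner_hadamard p g x :
  rinner p (hadamard g x) = rinner (hadamard (vconj g) p) x.
Proof.
rewrite /rinner /cinner; congr complex.Re; apply: eq_bigr => i _.
by rewrite !mxE rmorphM /= mulrA [_ * (x i 0)^*]mulrC.
Qed.

Lemma hadamardD g u v : hadamard g (u + v) = hadamard g u + hadamard g v.
Proof. by apply/matrixP => i j; rewrite !mxE mulrDr. Qed.

Lemma hadamardZ g (c : R[i]) v : hadamard g (c *: v) = c *: hadamard g v.
Proof. by apply/matrixP => i j; rewrite !mxE mulrCA. Qed.

Lemma rinner_le_sum p x : rinner p x <= \sum_i cabs (p i 0) * cabs (x i 0).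
Proof.
rewrite /rinner /cinner Re_sum; apply: ler_sum => i _.
by apply: le_trans (Re_le_cabs _) _; rewrite cabsM cabsJ mulrC.
Qed.

Lemma sqnorm2_ge0 v : 0 <= sqnorm2 v.
Proof. by apply: sumr_ge0 => i _; rewrite sqr_ge0. Qed.

Lemma sqnorm2Z (t : R) v : sqnorm2 (t%:C *: v) = t ^+ 2 * sqnorm2 v.
Proof.
rewrite /sqnorm2 mulr_sumr; apply: eq_bigr => i _.
by rewrite mxE cabsM cabs_real exprMn real_normK ?num_real.
Qed.

Lemma sqnorm2B u v : sqnorm2 (u - v) = sqnorm2 u - 2 * rinner u v + sqnorm2 v.
Proof.
rewrite /sqnorm2 /rinner /cinner Re_sum mulr_sumr -sumrB -big_split /=.
apply: eq_bigr => i _; rewrite !mxE !sqr_cabs Re_conjM.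
by case: (u i 0) => a b; case: (v i 0) => c d /=; ring.
Qed.

Local Notation n := (4 * M + 1)%N.

Definition atomic_costs x : set R :=
  [set s | exists (K : nat) (a : 'I_K -> R[i]) (tau : 'I_K -> R),
     (forall k, 0 <= tau k < 1) /\
     x = \sum_(k < K) a k *: atom M (tau k) /\
     s = \sum_(k < K) cabs (a k)].

Lemma atom_shift tau (i : 'I_n) :
  atom M tau i 0 * expNi (2 * pi * tau) ^+ (2 * M) = expNi (2 * pi * tau) ^+ i.
Proof.
rewrite mxE !expNiX.
change (expNi (2 * pi * (freq i)%:~R * tau) * expNi ((2 * M)%:R * (2 * pi * tau))
  = expNi (i%:R * (2 * pi * tau))).
by rewrite expNiD /freq intrB !pmulrn; congr expNi; ring.
Qed.

(* The angles [2 pi (node k)] are [pi k / n], in [0, pi) where cos is injective. *)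
Definition node (k : 'I_n) : R := k%:R / (2 * n%:R).

Lemma node_range k : 0 <= node k < 1.
Proof.
have n_gt0 : 0 < n%:R :> R by rewrite ltr0n addn1.
have k_lt_n : k%:R < n%:R :> R by rewrite ltr_nat ltn_ord.
rewrite /node divr_ge0 ?mulr_ge0 ?ler0n //= ltr_pdivrMr ?mulr_gt0 //; lra.
Qed.

Lemma expNi_node_inj : injective (fun k => expNi (2 * pi * node k)).
Proof.
have n_gt0 : 0 < n%:R :> R by rewrite ltr0n addn1.
have angleE k : 2 * pi * node k = pi * (k%:R / n%:R).
  by rewrite /node; field; rewrite gt_eqF //; have := ler0n R M; lra.
have angle_in k : 2 * pi * node k \in `[0, pi].
  have k_lt_n : k%:R < n%:R :> R by rewrite ltr_nat ltn_ord.
  rewrite angleE in_itv /= mulr_ge0 ?pi_ge0 ?divr_ge0 ?ler0n //=.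
  by rewrite ler_piMr ?pi_ge0 // ler_pdivrMr // mul1r ltW.
move=> k l /(congr1 (@complex.Re R)) /= /(cos_inj (angle_in k) (angle_in l)).
rewrite !angleE => /(mulfI (lt0r_neq0 (pi_gt0 R))).
move=> /(mulIf (invr_neq0 (lt0r_neq0 n_gt0))).
by move=> /eqP; rewrite eqr_nat => /eqP /val_inj.
Qed.

Lemma atomic_costs_nonempty x : exists s, atomic_costs x s.
Proof.
pose w k := expNi (2 * pi * node k).
pose W : 'M[R[i]]_n := Vandermonde n (\row_k w k).
have W_unit : W \in unitmx.
  rewrite unitmxE unitfE det_Vandermonde.
  apply/prodf_neq0 => i _; apply/prodf_neq0 => j ij; rewrite !mxE subr_eq0.
  by apply: contraTneq ij => /expNi_node_inj ->; rewrite ltnn.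
set b := invmx W *m x.
have xE : x = W *m b by rewrite mulKVmx.
clearbody b.
pose a k := b k 0 * w k ^+ (2 * M).
exists (\sum_k cabs (a k)), n, a, node; split; first exact: node_range.
split=> //; apply/matrixP => i j; rewrite (ord1 j) {1}xE mxE summxE.
apply: eq_bigr => k _; rewrite [RHS]mxE /W [in LHS]mxE [in LHS]mxE.
by rewrite -mulrA [_ ^+ (2 * M) * _]mulrC atom_shift mulrC.
Qed.

Lemma atomic_costs_ge0 x s : atomic_costs x s -> 0 <= s.
Proof. by case=> K [a [tau [_ [_ ->]]]]; apply: sumr_ge0 => k _; exact: cabs_ge0. Qed.

Lemma atomic_norm_le x s : atomic_costs x s -> atomic_norm x <= s.
Proof. by move=> xs; apply: ge_inf => //; exists 0 => t /atomic_costs_ge0. Qed.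

Lemma atomic_norm_ge x c : (forall s, atomic_costs x s -> c <= s) -> c <= atomic_norm x.
Proof. by move=> lb; apply: lb_le_inf => //; exact: atomic_costs_nonempty. Qed.

Lemma atomic_norm_ge0 x : 0 <= atomic_norm x.
Proof. exact/atomic_norm_ge/atomic_costs_ge0. Qed.

Lemma atomic_norm0 : atomic_norm (0 : V) = 0.
Proof.
apply/eqP; rewrite eq_le atomic_norm_ge0 andbT; apply: atomic_norm_le.
exists 0%N, (fun=> 0), (fun=> 0); split; first by case.
by rewrite !big_ord0.
Qed.

Lemma atomic_costsZ x s (c : R) :
  0 < c -> atomic_costs x s -> atomic_costs (c%:C *: x) (c * s).
Proof.
move=> c_gt0 [K [a [tau [tau01 [-> ->]]]]].
exists K, (fun k => c%:C * a k), tau; split=> //; split.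
  by rewrite scaler_sumr; apply: eq_bigr => k _; rewrite scalerA.
by rewrite mulr_sumr; apply: eq_bigr => k _; rewrite cabsM cabs_real gtr0_norm.
Qed.

Lemma atomic_normZ_le x (c : R) :
  0 < c -> atomic_norm (c%:C *: x) <= c * atomic_norm x.
Proof.
move=> c_gt0; rewrite -ler_pdivrMl //; apply: atomic_norm_ge => s xs.
by rewrite ler_pdivrMl //; apply/atomic_norm_le/atomic_costsZ.
Qed.

Lemma atomic_normZ x (c : R) :
  0 < c -> atomic_norm (c%:C *: x) = c * atomic_norm x.
Proof.
move=> c_gt0; apply/eqP; rewrite eq_le atomic_normZ_le //=.
have := @atomic_normZ_le (c%:C *: x) c^-1; rewrite invr_gt0 => /(_ c_gt0).
by rewrite scalerA -rmorphM /= mulVf ?gt_eqF // scale1r ler_pdivlMl.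
Qed.

Lemma atomic_costsD x1 x2 s1 s2 :
  atomic_costs x1 s1 -> atomic_costs x2 s2 -> atomic_costs (x1 + x2) (s1 + s2).
Proof.
move=> [K1 [a1 [t1 [t1_01 [-> ->]]]]] [K2 [a2 [t2 [t2_01 [-> ->]]]]].
pose glue T (f1 : 'I_K1 -> T) (f2 : 'I_K2 -> T) (k : 'I_(K1 + K2)) :=
  match fintype.split k with inl k1 => f1 k1 | inr k2 => f2 k2 end.
have glue_l T f1 f2 k : glue T f1 f2 (lshift K2 k) = f1 k.
  by rewrite /glue (unsplitK (inl _ k)).
have glue_r T f1 f2 k : glue T f1 f2 (rshift K1 k) = f2 k.
  by rewrite /glue (unsplitK (inr _ k)).
exists (K1 + K2)%N, (glue _ a1 a2), (glue _ t1 t2); split.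
  by move=> k; rewrite /glue; case: (fintype.split k).
by rewrite !big_split_ord; split; congr (_ + _); apply: eq_bigr => k _;
  rewrite ?glue_l ?glue_r.
Qed.

Lemma atomic_normD x1 x2 :
  atomic_norm (x1 + x2) <= atomic_norm x1 + atomic_norm x2.
Proof.
rewrite -lerBlDr; apply: atomic_norm_ge => s1 x1s1.
rewrite lerBlDr [s1 + _]addrC -lerBlDr; apply: atomic_norm_ge => s2 x2s2.
by rewrite lerBlDr [s2 + _]addrC; apply/atomic_norm_le/atomic_costsD.
Qed.

Lemma cabs_entry_le_atomic_norm x i : cabs (x i 0) <= atomic_norm x.
Proof.
apply: atomic_norm_ge => s [K [a [tau [_ [-> ->]]]]].
rewrite summxE; apply: le_trans (ler_cabs_sum _ _ _) _.
by apply: ler_sum => k _; rewrite !mxE cabsM cabs_expNi mulr1.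
Qed.

Lemma atomic_norm_eq0 x : atomic_norm x = 0 -> x = 0.
Proof.
move=> x0; apply/matrixP => i j; rewrite (ord1 j) mxE; apply: cabs0_eq0.
by apply/eqP; rewrite eq_le cabs_ge0 andbT -x0 cabs_entry_le_atomic_norm.
Qed.

Lemma rinner_le_dual_atomic_norm p x :
  rinner p x <= dual_atomic_norm p * atomic_norm x.
Proof.
have [x0|x_neq0] := eqVneq (atomic_norm x) 0.
  by rewrite (atomic_norm_eq0 _ x0) rinner0r atomic_norm0 mulr0.
have x_gt0 : 0 < atomic_norm x by rewrite lt_def x_neq0 atomic_norm_ge0.
set c := (atomic_norm x)^-1.
have c_gt0 : 0 < c by rewrite invr_gt0.
have unit_cx : atomic_norm (c%:C *: x) = 1 by rewrite atomic_normZ // mulVf.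
suff : rinner p (c%:C *: x) <= dual_atomic_norm p.
  by rewrite rinnerZr -ler_pdivlMl // invrK mulrC.
apply: ub_le_sup; last by exists (c%:C *: x); rewrite unit_cx.
exists (\sum_i cabs (p i 0)) => _ [z [z_le1 ->]].
apply: le_trans (rinner_le_sum _ _) _.
apply: ler_sum => i _; rewrite -[leRHS]mulr1 ler_wpM2l ?cabs_ge0 //.
exact: le_trans (cabs_entry_le_atomic_norm _ _) z_le1.
Qed.

Lemma dual_atomic_norm_le p (lam : R) :
  0 <= lam -> (forall x, rinner p x <= lam * atomic_norm x) ->
  dual_atomic_norm p <= lam.
Proof.
move=> lam_ge0 bound; apply: ge_sup; first by exists (rinner p 0), 0; rewrite atomic_norm0.
by move=> _ [x [x_le1 ->]]; apply: le_trans (bound x) _; rewrite ler_piMr.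
Qed.

Lemma rinner_le_of_descent r v (a : R) :
  (forall t, 0 < t < 1 ->
     2^-1 * sqnorm2 r <= 2^-1 * sqnorm2 (r - t%:C *: v) + t * a) ->
  rinner r v <= a.
Proof.
move=> descent; apply: (@ler_of_ler_add_mul_small _ _ _ (2^-1 * sqnorm2 v)).
move=> t t01; have := descent t t01; rewrite sqnorm2B rinnerZr sqnorm2Z.
by case/andP: t01 => t_gt0 _; nra.
Qed.

Lemma objectiveE y g (lam : R) x1 x2 : objective y g lam x1 x2 =
  2^-1 * sqnorm2 (y - (x1 + hadamard g x2)) + lam * (atomic_norm x1 + atomic_norm x2).
Proof. by rewrite /objective opprD addrA. Qed.

Lemma rinner_le_of_dual_bounds r g (lam : R) x1 x2 :
  dual_atomic_norm r <= lam -> dual_atomic_norm (hadamard (vconj g) r) <= lam ->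
  rinner r (x1 + hadamard g x2) <= lam * atomic_norm x1 + lam * atomic_norm x2.
Proof.
move=> r_le g_r_le; rewrite rinnerDr rinner_hadamard.
by apply: lerD; apply: le_trans (rinner_le_dual_atomic_norm _ _) _;
  rewrite ler_wpM2r ?atomic_norm_ge0.
Qed.

Variables (y g : V) (lam : R) (x1h x2h : V).
Let uh := x1h + hadamard g x2h.
Let r := y - uh.

Lemma optimal_of_conditions :
  dual_atomic_norm r <= lam -> dual_atomic_norm (hadamard (vconj g) r) <= lam ->
  rinner r uh = lam * atomic_norm x1h + lam * atomic_norm x2h ->
  forall x1 x2, objective y g lam x1h x2h <= objective y g lam x1 x2.
Proof.
move=> r_le g_r_le r_uh x1 x2.
have shiftE : y - (x1 + hadamard g x2) = r - (x1 + hadamard g x2 - uh).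
  by rewrite /r opprB addrA subrK.
rewrite !objectiveE -/uh -/r shiftE sqnorm2B rinnerDr rinnerNr r_uh.
have := @rinner_le_of_dual_bounds r g lam x1 x2 r_le g_r_le.
have := sqnorm2_ge0 (x1 + hadamard g x2 - uh).
lra.
Qed.

Hypothesis optimal : forall x1 x2, objective y g lam x1h x2h <= objective y g lam x1 x2.

Lemma descent_of_optimal x1 x2 v : x1 + hadamard g x2 = uh + v ->
  2^-1 * sqnorm2 r + lam * (atomic_norm x1h + atomic_norm x2h) <=
  2^-1 * sqnorm2 (r - v) + lam * (atomic_norm x1 + atomic_norm x2).
Proof.
move=> shift; have := optimal x1 x2.
by rewrite !objectiveE -/uh -/r shift opprD addrA.
Qed.

Hypothesis lam_ge0 : 0 <= lam.

Lemma dual_residual_le : dual_atomic_norm r <= lam.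
Proof.
apply: dual_atomic_norm_le => // d; apply: rinner_le_of_descent => t /andP[t_gt0 _].
have := descent_of_optimal (x1h + t%:C *: d) x2h (t%:C *: d) (addrAC _ _ _).
have := atomic_normD x1h (t%:C *: d); rewrite atomic_normZ // => tri.
have := ler_wpM2l lam_ge0 tri; lra.
Qed.

Lemma dual_hadamard_residual_le : dual_atomic_norm (hadamard (vconj g) r) <= lam.
Proof.
apply: dual_atomic_norm_le => // d; rewrite -rinner_hadamard.
apply: rinner_le_of_descent => t /andP[t_gt0 _].
have shift : x1h + hadamard g (x2h + t%:C *: d) = uh + t%:C *: hadamard g d.
  by rewrite hadamardD hadamardZ addrA.
have := descent_of_optimal _ _ _ shift.
have := atomic_normD x2h (t%:C *: d); rewrite atomic_normZ // => tri.
have := ler_wpM2l lam_ge0 tri; lra.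
Qed.

Lemma rinner_residual_eq : rinner r uh = lam * atomic_norm x1h + lam * atomic_norm x2h.
Proof.
apply/eqP; rewrite eq_le rinner_le_of_dual_bounds ?dual_residual_le
  ?dual_hadamard_residual_le //=.
rewrite -lerN2 -rinnerNr.
apply: rinner_le_of_descent => t /andP[t_gt0 t_lt1].
have shrink : (1 - t)%:C *: x1h + hadamard g ((1 - t)%:C *: x2h) = uh + t%:C *: - uh.
  by rewrite hadamardZ -scalerDr -/uh rmorphB /= scalerBl scale1r scalerN.
have := descent_of_optimal _ _ _ shrink.
rewrite !atomic_normZ ?subr_gt0 //; lra.
Qed.

End AtomicNormOptimality.

Theorem proposition7 (R : realType) (M : nat) (hM : (1 <= M)%N)
    (y g : cvec R M) (lam : R) (hlam : 0 < lam) (x1h x2h : cvec R M) :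
  (forall x1 x2 : cvec R M,
      objective y g lam x1h x2h <= objective y g lam x1 x2) <->
  (let r := y - (x1h + hadamard g x2h) in
   [/\ dual_atomic_norm r <= lam,
       dual_atomic_norm (hadamard (vconj g) r) <= lam &
       rinner r (x1h + hadamard g x2h) =
         lam * atomic_norm x1h + lam * atomic_norm x2h]).
Proof.
split=> [optimal | [r_le g_r_le r_uh]]; last exact: optimal_of_conditions.
have lam_ge0 := ltW hlam.
by split; [apply: dual_residual_le | apply: dual_hadamard_residual_le
  | apply: rinner_residual_eq].
Qed.
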